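(* Let $f$ be a positive definite function and let $W=\{w_1,\dots,w_N\}\subset V$ be a norming set for $\mathcal{B}_M$. Let $\mathrm{Q}_Wx=\sum_{k=1}^N\mu_kx(w_k)$ be a quadrature rule (with real weights $\mu_k$) that is exact on $\mathcal{N}_{K_f,W}$, i.e. $\frac1n\sum_{i=1}^n y(v_i)=\mathrm{Q}_Wy$ for all $y\in\mathcal{N}_{K_f,W}$. Then for every $x\in\mathcal{L}(G)$, $$\Big|\frac1n\sum_{i=1}^nx(v_i)-\mathrm{Q}_Wx\Big|\le\big(1+\|(\mathbf{S}_W\mathbf{B}_M)^{-1}\|\big)\Big(\sum_{k=M+1}^n\hat{f}_k\Big)^{1/2}\|x\|_{K_f}.$$
   Context: Let $G$ be a graph with vertex set $V=\{v_1,\dots,v_n\}$, symmetric non-negative weighted adjacency matrix $\mathbf{A}$, degree matrix $\mathbf{D}=\mathrm{diag}(\sum_k\mathbf{A}_{ik})$ (positive), and normalized Laplacian $\mathbf{L}=\mathbf{I}_n-\mathbf{D}^{-1/2}\mathbf{A}\mathbf{D}^{-1/2}$. Signals are vectors in $\mathcal{L}(G)\cong\mathbb{R}^n$ with euclidean norm and standard basis $e_1,\dots,e_n$. Fix an orthonormal eigendecomposition $\mathbf{L}=\mathbf{U}\,\mathrm{diag}(\lambda_1,\dots,\lambda_n)\mathbf{U}^\intercal$ with columns $u_1,\dots,u_n$. Fourier transform $\hat{x}=\mathbf{U}^\intercal x$; convolution operator $\mathbf{C}_x=\mathbf{U}\,\mathrm{diag}(\hat{x})\mathbf{U}^\intercal$.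 For $f\in\mathcal{L}(G)$ let $(\mathbf{K}_f)_{ij}=(\mathbf{C}_{e_j}f)(v_i)$; $f$ is a positive definite function if $\mathbf{K}_f$ is symmetric strictly positive definite; then $\|x\|_{K_f}=\sqrt{x^\intercal\mathbf{K}_f^{-1}x}$. For distinct nodes $w_k=v_{j_k}$, $\mathcal{N}_{K_f,W}=\mathrm{span}\{\mathbf{C}_{e_{j_1}}f,\dots,\mathbf{C}_{e_{j_N}}f\}$. Let $\mathcal{B}_M=\mathrm{span}\{u_1,\dots,u_M\}$, $\mathbf{S}_Wx(v)=x(v)$ for $v\in W$ and $0$ otherwise, $\mathbf{B}_Mx=\sum_{k=1}^M(u_k^\intercal x)u_k$. $W$ is a norming set for $\mathcal{B}_M$ if $\mathbf{S}_W\mathbf{B}_M$ is injective on $\mathcal{B}_M$; $\|(\mathbf{S}_W\mathbf{B}_M)^{-1}\|$ is the euclidean operator norm of the inverse of $\mathbf{S}_W\mathbf{B}_M|_{\mathcal{B}_M}$ on its image $\mathbf{S}_W(\mathcal{B}_M)$. *)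

From HB Require Import structures.
From mathcomp Require Import all_boot all_order all_algebra.
From mathcomp Require Import classical_sets reals.
Set Implicit Arguments. Unset Strict Implicit. Unset Printing Implicit Defensive.
Import Order.TTheory GRing.Theory Num.Theory.
Local Open Scope ring_scope.
Local Open Scope classical_set_scope.

(* Signals on a graph with n nodes v_0..v_{n-1} are column vectors 'cV[R]_n;
   x(v_i) is x i 0.  Indices are 0-based: u_k of the paper is col (k-1) U. *)

Section GraphSP.
Variables (R : realType) (n : nat).

Definition enorm (x : 'cV[R]_n) : R := Num.sqrt (\sum_i x i 0 ^+ 2).

Definition deg (A : 'M[R]_n) (i : 'I_n) : R := \sum_k A i k.

Definition normLap (A : 'M[R]_n) : 'M[R]_n :=
  let Dmh := diag_mx (\row_i (Num.sqrt (deg A i))^-1) in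
  1%:M - Dmh *m A *m Dmh.

Definition graph_weights (A : 'M[R]_n) : Prop :=
  A^T = A /\ (forall i j, 0 <= A i j) /\ (forall i, 0 < deg A i).

Definition ortho_eigen (L U : 'M[R]_n) (lam : 'rV[R]_n) : Prop :=
  U^T *m U = 1%:M /\ L = U *m diag_mx lam *m U^T.

Definition fourier (U : 'M[R]_n) (x : 'cV[R]_n) : 'cV[R]_n := U^T *m x.

Definition convop (U : 'M[R]_n) (x : 'cV[R]_n) : 'M[R]_n :=
  U *m diag_mx (fourier U x)^T *m U^T.

Definition ebase (j : 'I_n) : 'cV[R]_n := delta_mx j 0.

Definition Kmat (U : 'M[R]_n) (f : 'cV[R]_n) : 'M[R]_n :=
  \matrix_(i, j) (convop U (ebase j) *m f) i 0.

Definition pos_def_fun (U : 'M[R]_n) (f : 'cV[R]_n) : Prop :=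
  (Kmat U f)^T = Kmat U f /\
  forall x : 'cV[R]_n, x != 0 -> 0 < (x^T *m Kmat U f *m x) 0 0.

Definition Knorm (U : 'M[R]_n) (f x : 'cV[R]_n) : R :=
  Num.sqrt ((x^T *m invmx (Kmat U f) *m x) 0 0).

Definition inBM (U : 'M[R]_n) (M : nat) (y : 'cV[R]_n) : Prop :=
  exists c : 'I_n -> R, y = \sum_(k < n | (k < M)%N) c k *: col k U.

Definition projBM (U : 'M[R]_n) (M : nat) (x : 'cV[R]_n) : 'cV[R]_n :=
  \sum_(k < n | (k < M)%N) ((col k U)^T *m x) 0 0 *: col k U.

Definition sampleW (N : nat) (w : 'I_N -> 'I_n) (x : 'cV[R]_n) : 'cV[R]_n :=
  \col_i (if i \in [seq w k | k <- enum 'I_N] then x i 0 else 0).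

Definition norming_set (U : 'M[R]_n) (M N : nat) (w : 'I_N -> 'I_n) : Prop :=
  forall y1 y2, inBM U M y1 -> inBM U M y2 ->
    sampleW w (projBM U M y1) = sampleW w (projBM U M y2) -> y1 = y2.

Definition inv_opnorm (U : 'M[R]_n) (M N : nat) (w : 'I_N -> 'I_n) : R :=
  sup [set r | exists y, [/\ inBM U M y, y != 0 &
                 r = enorm y / enorm (sampleW w (projBM U M y))]].

Definition inNKW (U : 'M[R]_n) (f : 'cV[R]_n) (N : nat) (w : 'I_N -> 'I_n)
  (y : 'cV[R]_n) : Prop :=
  exists c : 'I_N -> R, y = \sum_k c k *: (convop U (ebase (w k)) *m f).

Definition quadW (N : nat) (w : 'I_N -> 'I_n) (mu : 'I_N -> R)
  (x : 'cV[R]_n) : R := \sum_k mu k * x (w k) 0.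

Definition meanv (x : 'cV[R]_n) : R := n%:R^-1 * \sum_i x i 0.

End GraphSP.

From mathcomp Require Import all_boot all_order all_algebra.
From mathcomp Require Import boolp classical_sets reals.
From mathcomp.algebra_tactics Require Import ring lra.

(** The quadrature error is the linear functional [x |-> e^T x] for a fixed
    vector [e], so Cauchy-Schwarz in the native inner product bounds it by
    [sqrt (e^T K_f e) * ||x||_{K_f}].  Exactness on [N_{K_f,W}] means that the
    representer [h = K_f e] vanishes on [W]; hence [q = e^T K_f e] is the mean
    of [h], and [q^2 <= ||h||^2].  The low-frequency part [B_M h] and the
    high-frequency part [h - B_M h] have opposite samples on [W], so the
    norming inequality gives [||B_M h|| <= ||(S_W B_M)^-1|| ||h - B_M h||],
    while [||h - B_M h||^2 = sum_(k >= M) (f^_k e^_k)^2 <= (sum_(k >= M) f^_k) q].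
    Altogether [q <= (1 + ||(S_W B_M)^-1||)^2 sum_(k >= M) f^_k]. *)
Set Implicit Arguments. Unset Strict Implicit. Unset Printing Implicit Defensive.
Import Order.TTheory GRing.Theory Num.Theory.
Local Open Scope ring_scope.

Section WeightedSums.
Variables (R : realFieldType) (I : finType).

Lemma sum_sqr_ge0 (a : I -> R) : 0 <= \sum_i a i ^+ 2.
Proof. by apply: sumr_ge0 => i _; apply: sqr_ge0. Qed.

Lemma weighted_Cauchy_Schwarz (d a b : I -> R) : (forall i, 0 < d i) ->
  (\sum_i a i * b i) ^+ 2 <= (\sum_i d i * a i ^+ 2) * \sum_i b i ^+ 2 / d i.
Proof.
move=> d_gt0; set A := \sum_i _ * _ ^+ 2; set B := \sum_i _ / _; set C := \sum_i _.
have dB_ge0 i : 0 <= b i ^+ 2 / d i by rewrite divr_ge0 ?sqr_ge0 ?ltW.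
have B_ge0 : 0 <= B by apply: sumr_ge0.
have expand : \sum_i d i * (a i * B - b i / d i * C) ^+ 2 = B * (A * B - C ^+ 2).
  transitivity (\sum_i (B ^+ 2 * (d i * a i ^+ 2) - 2 * B * C * (a i * b i)
                        + C ^+ 2 * (b i ^+ 2 / d i))).
    by apply: eq_bigr => i _; move: (lt0r_neq0 (d_gt0 i)) => di_neq0; field.
  by rewrite big_split sumrB /= -!mulr_sumr -/A -/B -/C; ring.
have disc_ge0 : 0 <= B * (A * B - C ^+ 2).
  by rewrite -expand; apply: sumr_ge0 => i _; rewrite mulr_ge0 ?sqr_ge0 ?ltW.
have [B0 | B_neq0] := eqVneq B 0; last first.
  by rewrite -subr_ge0 -(pmulr_rge0 _ (_ : 0 < B)) // lt_def B_neq0.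
have b0 i : b i = 0.
  move/eqP: B0; rewrite psumr_eq0 // => /allP /(_ i (mem_index_enum i)).
  by rewrite mulf_eq0 invr_eq0 (negPf (lt0r_neq0 (d_gt0 i))) orbF sqrf_eq0 => /eqP.
rewrite /C big1 ?expr0n ?mulr_ge0 //=; last by move=> i _; rewrite b0 mulr0.
by apply: sumr_ge0 => i _; rewrite mulr_ge0 ?sqr_ge0 ?ltW.
Qed.

Lemma Cauchy_Schwarz (a b : I -> R) :
  (\sum_i a i * b i) ^+ 2 <= (\sum_i a i ^+ 2) * \sum_i b i ^+ 2.
Proof.
rewrite -(eq_bigr _ (fun i _ => mul1r (a i ^+ 2))).
rewrite -(eq_bigr _ (fun i _ => divr1 (b i ^+ 2))).
exact: (@weighted_Cauchy_Schwarz (fun=> 1) a b (fun=> ltr01)).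
Qed.

Lemma sum_weighted_sqr_le (P : pred I) (d a : I -> R) : (forall i, 0 <= d i) ->
  \sum_(i | P i) (d i * a i) ^+ 2 <= (\sum_(i | P i) d i) * \sum_i d i * a i ^+ 2.
Proof.
move=> d_ge0; rewrite mulr_suml; apply: ler_sum => i _.
rewrite exprMn expr2 -mulrA ler_wpM2l // (bigD1 i) //= lerDl.
by apply: sumr_ge0 => j _; rewrite mulr_ge0 ?sqr_ge0.
Qed.

End WeightedSums.

Section Masks.
Variables (R : comPzRingType) (n : nat).

Definition maskmx (P : pred 'I_n) : 'M[R]_n := diag_mx (\row_k (P k)%:R).

Lemma maskmxE (P : pred 'I_n) (v : 'cV[R]_n) i :
  (maskmx P *m v) i 0 = if P i then v i 0 else 0.
Proof. by rewrite mul_diag_mx !mxE; case: (P i); rewrite ?mul1r ?mul0r. Qed.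

Lemma maskmxK (P : pred 'I_n) : maskmx P *m maskmx P = maskmx P.
Proof.
rewrite mulmx_diag; congr diag_mx; apply/matrixP => i j; rewrite !mxE.
by case: (P j); rewrite ?mul1r ?mul0r.
Qed.

Lemma maskmxC (P : pred 'I_n) : maskmx (predC P) = 1%:M - maskmx P.
Proof.
apply/matrixP => i j; rewrite !mxE /=.
by case: (i == j); case: (P i); rewrite /= ?mulr1n ?mulr0n ?subrr ?subr0.
Qed.

Lemma sum_scale_col (V : 'M[R]_n) (P : pred 'I_n) (c : 'I_n -> R) :
  \sum_(k | P k) c k *: col k V = V *m (maskmx P *m \col_k c k).
Proof.
apply/matrixP => i j; rewrite summxE mxE big_mkcond /=.
apply: eq_bigr => k _; rewrite mul_diag_mx !mxE.
by case: (P k); rewrite ?mul1r ?mul0r ?mulr0 // mulrC.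
Qed.

End Masks.
Arguments maskmx {R n}.

Section EuclideanNorm.
Variable R : realType.
Implicit Types (m n : nat).

Lemma enorm_ge0 n (v : 'cV[R]_n) : 0 <= enorm v.
Proof. exact: sqrtr_ge0. Qed.

Lemma enorm_sqr n (v : 'cV[R]_n) : enorm v ^+ 2 = \sum_i v i 0 ^+ 2.
Proof. by rewrite sqr_sqrtr // sum_sqr_ge0. Qed.

Lemma enormN n (v : 'cV[R]_n) : enorm (- v) = enorm v.
Proof. by rewrite /enorm; under eq_bigr do rewrite mxE sqrrN. Qed.

Lemma enorm_eq0 n (v : 'cV[R]_n) : (enorm v == 0) = (v == 0).
Proof.
rewrite -sqrf_eq0 enorm_sqr psumr_eq0 => [|i _]; last exact: sqr_ge0.
apply/allP/eqP => [v0 | -> i _]; last by rewrite mxE expr0n eqxx.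
apply/matrixP => i j; rewrite [j]ord1 mxE; apply/eqP.
by rewrite -sqrf_eq0; apply: (implyP (v0 i (mem_index_enum i))).
Qed.

Lemma enorm0 n : enorm (0 : 'cV[R]_n) = 0.
Proof. by apply/eqP; rewrite enorm_eq0. Qed.

Lemma enorm_mulmx_le m n (A : 'M[R]_(m, n)) (v : 'cV[R]_n) :
  enorm (A *m v) <= Num.sqrt (\sum_i \sum_j A i j ^+ 2) * enorm v.
Proof.
have A_ge0 : 0 <= \sum_i \sum_j A i j ^+ 2.
  by apply: sumr_ge0 => i _; apply: sum_sqr_ge0.
rewrite -sqrtrM // ler_sqrt ?mulr_ge0 ?sum_sqr_ge0 //.
rewrite mulr_suml; apply: ler_sum => i _; rewrite mxE; exact: Cauchy_Schwarz.
Qed.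

Lemma meanv_sqr_le n (v : 'cV[R]_n) : meanv v ^+ 2 <= enorm v ^+ 2.
Proof.
have sum_sqr_le : (\sum_i v i 0) ^+ 2 <= n%:R * \sum_i v i 0 ^+ 2.
  have := @Cauchy_Schwarz _ _ (fun=> 1) (fun i => v i 0).
  by rewrite (eq_bigr _ (fun i _ => mul1r _)) (eq_bigr _ (fun i _ => expr1n _ _))
    sumr_const card_ord.
rewrite enorm_sqr /meanv exprMn.
have [-> | n_neq0] := eqVneq (n%:R : R) 0.
  by rewrite invr0 expr0n mul0r sum_sqr_ge0.
apply: le_trans (ler_wpM2l (sqr_ge0 _) sum_sqr_le) _.
have n_gt0 : 0 < (n%:R : R) by rewrite lt_def n_neq0 ler0n.
rewrite expr2 -mulrA mulKf // ler_piMl ?sum_sqr_ge0 // invf_le1 //.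
by rewrite ler1n lt0n -(pnatr_eq0 R).
Qed.

Lemma enorm_maskmx n (P : pred 'I_n) (v : 'cV[R]_n) :
  enorm (maskmx P *m v) ^+ 2 = \sum_(k | P k) v k 0 ^+ 2.
Proof.
rewrite enorm_sqr [RHS]big_mkcond; apply: eq_bigr => k _.
by rewrite maskmxE; case: (P k); rewrite ?expr0n.
Qed.

Lemma enorm_maskmx_le n (P : pred 'I_n) (v : 'cV[R]_n) :
  enorm (maskmx P *m v) <= enorm v.
Proof.
rewrite -(ler_pXn2r (_ : 0 < 2)%N) ?nnegrE ?enorm_ge0 // enorm_maskmx enorm_sqr.
rewrite [leRHS](bigID P) /= lerDl; apply: sumr_ge0 => i _; exact: sqr_ge0.
Qed.

Lemma sampleW_maskmx n N (w : 'I_N -> 'I_n) (x : 'cV[R]_n) :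
  sampleW w x = maskmx [pred i | i \in [seq w k | k <- enum 'I_N]] *m x.
Proof. by apply/matrixP => i j; rewrite [j]ord1 maskmxE mxE. Qed.

End EuclideanNorm.

Lemma mulmx1_invmx (R : comUnitRingType) n (A B : 'M[R]_n) :
  A *m B = 1%:M -> invmx A = B.
Proof.
move=> AB1; have [A_unit _] := mulmx1_unit AB1.
by rewrite -[invmx A]mulmx1 -AB1 mulmxA mulVmx // mul1mx.
Qed.

Section QuadraticForms.
Variables (R : comPzRingType) (n : nat).

Lemma dotmxE (a b : 'cV[R]_n) : (a^T *m b) 0 0 = \sum_i a i 0 * b i 0.
Proof. by rewrite mxE; apply: eq_bigr => i _; rewrite mxE. Qed.

Lemma quad_form_diag (d : 'rV[R]_n) (a b : 'cV[R]_n) :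
  (a^T *m diag_mx d *m b) 0 0 = \sum_k a k 0 * d 0 k * b k 0.
Proof. by rewrite mul_mx_diag mxE; apply: eq_bigr => i _; rewrite !mxE. Qed.

Lemma quad_form_conj (U D : 'M[R]_n) (a b : 'cV[R]_n) :
  a^T *m (U *m D *m U^T) *m b = (U^T *m a)^T *m D *m (U^T *m b).
Proof. by rewrite trmx_mul trmxK !mulmxA. Qed.

Lemma diag_mx_trC (a b : 'cV[R]_n) : diag_mx a^T *m b = diag_mx b^T *m a.
Proof. by apply/matrixP => i k; rewrite !mul_diag_mx !mxE [k]ord1 mulrC. Qed.

End QuadraticForms.

Section Spectral.
Variables (R : realType) (n : nat) (U : 'M[R]_n) (f : 'cV[R]_n).
Hypothesis U_orth : U^T *m U = 1%:M.

Lemma U_orthT : U *m U^T = 1%:M.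
Proof. exact: mulmx1C. Qed.

Lemma dot_orth (a b : 'cV[R]_n) : (U^T *m a)^T *m (U^T *m b) = a^T *m b.
Proof. by rewrite trmx_mul trmxK -mulmxA (mulmxA U) U_orthT mul1mx. Qed.

Lemma enorm_orth (v : 'cV[R]_n) : enorm (U^T *m v) = enorm v.
Proof.
rewrite /enorm; congr Num.sqrt.
under eq_bigr do rewrite expr2; rewrite -dotmxE dot_orth dotmxE.
by under eq_bigr do rewrite -expr2.
Qed.

Lemma Kmat_spectral : Kmat U f = U *m diag_mx (fourier U f)^T *m U^T.
Proof.
apply/matrixP => i j; rewrite mxE /convop /fourier /ebase.
by rewrite -!mulmxA diag_mx_trC !mulmxA -colE mxE.
Qed.

Lemma Kform_spectral (e : 'cV[R]_n) :
  (e^T *m Kmat U f *m e) 0 0 = \sum_k fourier U f k 0 * (U^T *m e) k 0 ^+ 2.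
Proof.
rewrite Kmat_spectral quad_form_conj quad_form_diag.
by apply: eq_bigr => k _; rewrite !mxE; ring.
Qed.

Hypothesis f_pd : pos_def_fun U f.

Lemma fourier_gt0 k : 0 < fourier U f k 0.
Proof.
have Uek : U^T *m (U *m ebase R k) = ebase R k by rewrite mulmxA U_orth mul1mx.
have Uek_neq0 : U *m ebase R k != 0.
  apply: contraTneq isT => Uek0; move: Uek; rewrite Uek0 mulmx0.
  by move/matrixP/(_ k 0); rewrite !mxE !eqxx => /eqP; rewrite eq_sym oner_eq0.
have := f_pd.2 _ Uek_neq0; rewrite Kform_spectral Uek (bigD1 k) //= big1.
  by rewrite [ebase R k k 0]mxE !eqxx expr1n mulr1 addr0.
by move=> j /negbTE jk; rewrite [ebase R k j 0]mxE jk expr0n mulr0.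
Qed.

Lemma invmx_Kmat :
  invmx (Kmat U f) = U *m diag_mx (\row_k (fourier U f k 0)^-1) *m U^T.
Proof.
apply: mulmx1_invmx; rewrite Kmat_spectral -!mulmxA (mulmxA U^T) U_orth mul1mx.
rewrite (mulmxA (diag_mx _)) mulmx_diag.
have -> : \row_j ((fourier U f)^T 0 j * (\row_k (fourier U f k 0)^-1) 0 j)
          = const_mx 1.
  apply/matrixP => i j; have := lt0r_neq0 (fourier_gt0 j).
  by rewrite !mxE => f_neq0; rewrite mulfV.
by rewrite diag_const_mx mul1mx U_orthT.
Qed.

Lemma Knorm_spectral (x : 'cV[R]_n) :
  Knorm U f x = Num.sqrt (\sum_k (U^T *m x) k 0 ^+ 2 / fourier U f k 0).
Proof.
rewrite /Knorm invmx_Kmat quad_form_conj quad_form_diag.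
by congr Num.sqrt; apply: eq_bigr => k _; rewrite !mxE mulrAC expr2.
Qed.

Lemma abs_dot_le_Knorm (e x : 'cV[R]_n) :
  `|(e^T *m x) 0 0| <= Num.sqrt ((e^T *m Kmat U f *m e) 0 0) * Knorm U f x.
Proof.
have Kf_ge0 : 0 <= \sum_k fourier U f k 0 * (U^T *m e) k 0 ^+ 2.
  by apply: sumr_ge0 => k _; rewrite mulr_ge0 ?sqr_ge0 // ltW ?fourier_gt0.
rewrite -dot_orth dotmxE Knorm_spectral Kform_spectral -sqrtrM // -sqrtr_sqr.
rewrite ler_sqrt ?mulr_ge0 //; last first.
  by apply: sumr_ge0 => k _; rewrite divr_ge0 ?sqr_ge0 // ltW ?fourier_gt0.
exact: weighted_Cauchy_Schwarz fourier_gt0.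
Qed.

Lemma tail_Kmat_le (P : pred 'I_n) (e : 'cV[R]_n) :
  \sum_(k | P k) (U^T *m (Kmat U f *m e)) k 0 ^+ 2
    <= (\sum_(k | P k) fourier U f k 0) * (e^T *m Kmat U f *m e) 0 0.
Proof.
have UKe k : (U^T *m (Kmat U f *m e)) k 0 = fourier U f k 0 * (U^T *m e) k 0.
  rewrite Kmat_spectral -!mulmxA (mulmxA U^T) U_orth mul1mx mul_diag_mx.
  by rewrite !mxE.
under eq_bigr do rewrite UKe; rewrite Kform_spectral.
by apply: sum_weighted_sqr_le => k; rewrite ltW ?fourier_gt0.
Qed.

End Spectral.

Lemma submx_kernel (F : fieldType) m1 m2 n (A : 'M[F]_(m1, n)) (B : 'M[F]_(m2, n)) :
  (forall c : 'cV_n, A *m c = 0 -> B *m c = 0) -> (B <= A)%MS.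
Proof.
move=> kerAB; rewrite submxE; apply/eqP/matrixP => i j.
have := kerAB (col j (cokermx A)); rewrite colE mulmxA mulmx_coker mul0mx.
by move=> /(_ erefl)/matrixP/(_ i 0); rewrite mulmxA -colE !mxE.
Qed.

Section NormingSet.
Variables (R : realType) (n : nat) (U : 'M[R]_n) (M N : nat) (w : 'I_N -> 'I_n).
Hypothesis U_orth : U^T *m U = 1%:M.

Let lowM : pred 'I_n := fun k => (k < M)%N.

Lemma projBM_spectral (x : 'cV[R]_n) :
  projBM U M x = U *m (maskmx lowM *m (U^T *m x)).
Proof.
rewrite /projBM sum_scale_col; congr (_ *m (_ *m _)).
apply/matrixP => k j; rewrite [j]ord1 mxE dotmxE [RHS]mxE.
by apply: eq_bigr => i _; rewrite !mxE.
Qed.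

Lemma projBM_inBM (x : 'cV[R]_n) : inBM U M (projBM U M x).
Proof. by exists (fun k => ((col k U)^T *m x) 0 0). Qed.

Lemma inBM_projBM (y : 'cV[R]_n) : inBM U M y -> projBM U M y = y.
Proof.
case=> c ->; rewrite sum_scale_col projBM_spectral.
by rewrite (mulmxA U^T U) U_orth mul1mx mulmxA maskmxK.
Qed.

Lemma inBM0 : inBM U M 0.
Proof. by exists (fun=> 0); rewrite big1 // => k _; rewrite scale0r. Qed.

Lemma inv_opnorm_ge0 : 0 <= inv_opnorm U M w.
Proof.
rewrite /inv_opnorm; set E := (X in sup X).
have [E_sup | /sup_out -> //] := pselect (has_sup E).
have [r Er] := E_sup.1; apply: le_trans (sup_upper_bound E_sup Er).
by case: Er => y [_ _ ->]; rewrite divr_ge0 ?enorm_ge0.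
Qed.

Hypothesis W_norming : norming_set U M w.

Lemma sampleW_inBM_eq0 (y : 'cV[R]_n) : inBM U M y -> sampleW w y = 0 -> y = 0.
Proof.
move=> y_BM Sy0; apply: (W_norming y_BM inBM0).
by rewrite (inBM_projBM y_BM) (inBM_projBM inBM0) Sy0 sampleW_maskmx mulmx0.
Qed.

Lemma enorm_sampleW_gt0 (y : 'cV[R]_n) :
  inBM U M y -> y != 0 -> 0 < enorm (sampleW w y).
Proof.
move=> y_BM y_neq0; rewrite lt_def enorm_ge0 enorm_eq0 andbT.
by apply: contra_neq y_neq0; apply: sampleW_inBM_eq0.
Qed.

Lemma norming_bounded :
  exists C, forall y, inBM U M y -> enorm y <= C * enorm (sampleW w y).
Proof.
set P := U *m maskmx lowM *m U^T.
set S := maskmx [pred i | i \in [seq w k | k <- enum 'I_N]] : 'M[R]_n.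
have projBM_P x : projBM U M x = P *m x by rewrite projBM_spectral !mulmxA.
have /submxP [L P_L] : (P <= S *m P)%MS.
  apply: submx_kernel => c; rewrite -mulmxA -projBM_P -sampleW_maskmx.
  by apply: sampleW_inBM_eq0; apply: projBM_inBM.
exists (Num.sqrt (\sum_i \sum_j L i j ^+ 2)) => y y_BM.
have y_L : y = L *m sampleW w y.
  rewrite sampleW_maskmx -{1}(inBM_projBM y_BM) projBM_P P_L -mulmxA -(mulmxA S).
  by rewrite -projBM_P (inBM_projBM y_BM).
by rewrite {1}y_L; apply: enorm_mulmx_le.
Qed.

Lemma enorm_le_inv_opnorm (y : 'cV[R]_n) :
  inBM U M y -> enorm y <= inv_opnorm U M w * enorm (sampleW w y).
Proof.
move=> y_BM; have [-> | y_neq0] := eqVneq y 0.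
  by rewrite enorm0 mulr_ge0 ?inv_opnorm_ge0 ?enorm_ge0.
have [C bound_C] := norming_bounded.
have Sy_gt0 := enorm_sampleW_gt0 y_BM y_neq0.
rewrite -ler_pdivrMr // /inv_opnorm; set E := (X in sup X).
have E_y : E (enorm y / enorm (sampleW w y)).
  by exists y; rewrite (inBM_projBM y_BM).
apply: (sup_upper_bound _ E_y); split; first exact: (ex_intro _ _ E_y).
exists C => _ [z [z_BM z_neq0 ->]]; rewrite (inBM_projBM z_BM).
by rewrite ler_pdivrMr ?bound_C ?enorm_sampleW_gt0.
Qed.

Lemma enorm_sqr_vanishing_le (x : 'cV[R]_n) : sampleW w x = 0 ->
  enorm x ^+ 2 <= (1 + inv_opnorm U M w ^+ 2) *
                  \sum_(k < n | (M <= k)%N) (U^T *m x) k 0 ^+ 2.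
Proof.
move=> Sx0; set s := inv_opnorm U M w; have s_ge0 : 0 <= s := inv_opnorm_ge0.
set y := projBM U M x; set z := x - y.
have Uy : U^T *m y = maskmx lowM *m (U^T *m x).
  by rewrite /y projBM_spectral mulmxA U_orth mul1mx.
have Uz : U^T *m z = maskmx (predC lowM) *m (U^T *m x).
  by rewrite maskmxC mulmxBl mul1mx -Uy mulmxBr.
have z_tail : enorm z ^+ 2 = \sum_(k < n | (M <= k)%N) (U^T *m x) k 0 ^+ 2.
  rewrite -(enorm_orth U_orth z) Uz enorm_maskmx.
  by apply: eq_bigl => k; rewrite /= -leqNgt.
have pythagoras : enorm x ^+ 2 = enorm y ^+ 2 + enorm z ^+ 2.
  rewrite -(enorm_orth U_orth x) -(enorm_orth U_orth y) -(enorm_orth U_orth z).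
  by rewrite Uy Uz !enorm_maskmx enorm_sqr (bigID lowM).
have Sy : sampleW w y = sampleW w (- z).
  apply/eqP; rewrite !sampleW_maskmx mulmxN -subr_eq0 opprK -mulmxDr.
  by rewrite /z addrC subrK -sampleW_maskmx Sx0.
have y_le : enorm y <= s * enorm z.
  apply: le_trans (enorm_le_inv_opnorm (projBM_inBM x)) _.
  rewrite ler_wpM2l // Sy -(enormN z) sampleW_maskmx.
  exact: enorm_maskmx_le.
rewrite -z_tail pythagoras mulrDl mul1r addrC lerD2l -exprMn.
by rewrite ler_pXn2r // nnegrE ?enorm_ge0 // mulr_ge0 ?enorm_ge0.
Qed.

End NormingSet.

Section Quadrature.
Variables (R : realType) (n N : nat) (w : 'I_N -> 'I_n) (mu : 'I_N -> R).

Definition err_vec : 'cV[R]_n := \col_i (n%:R^-1 - \sum_k mu k * (w k == i)%:R).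

Lemma err_vecE (y : 'cV[R]_n) : meanv y - quadW w mu y = (err_vec^T *m y) 0 0.
Proof.
rewrite dotmxE /meanv /quadW mulr_sumr.
have -> : \sum_k mu k * y (w k) 0 = \sum_i (\sum_k mu k * (w k == i)%:R) * y i 0.
  under [RHS]eq_bigr do rewrite mulr_suml.
  rewrite exchange_big /=; apply: eq_bigr => k _.
  rewrite (bigD1 (w k)) //= eqxx mulr1 big1 ?addr0 // => i /negbTE.
  by rewrite eq_sym => ->; rewrite mulr0 mul0r.
by rewrite -sumrB; apply: eq_bigr => i _; rewrite mxE mulrBl.
Qed.

Variables (U : 'M[R]_n) (f : 'cV[R]_n).
Hypothesis f_pd : pos_def_fun U f.
Hypothesis Q_exact : forall y, inNKW U f w y -> meanv y = quadW w mu y.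

Lemma sampleW_Kmat_err : sampleW w (Kmat U f *m err_vec) = 0.
Proof.
have K_sym i j : Kmat U f i j = Kmat U f j i by rewrite -[in LHS]f_pd.1 mxE.
apply/matrixP => i j; rewrite [j]ord1 [LHS]mxE [RHS]mxE.
case: ifP => // /mapP [k _ ->].
have col_wk : col (w k) (Kmat U f) = convop U (ebase R (w k)) *m f.
  by apply/matrixP => l b; rewrite [b]ord1 mxE /Kmat mxE.
have col_wk_N : inNKW U f w (col (w k) (Kmat U f)).
  exists (fun l => (l == k)%:R); rewrite col_wk (bigD1 k) //= eqxx scale1r.
  by rewrite big1 ?addr0 // => l /negbTE ->; rewrite scale0r.
move/eqP: (Q_exact col_wk_N); rewrite -subr_eq0 err_vecE => /eqP <-.
rewrite dotmxE mxE; apply: eq_bigr => l _.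
by rewrite [col _ _ _ _]mxE (K_sym l (w k)) mulrC.
Qed.

Variables (M : nat).
Hypothesis U_orth : U^T *m U = 1%:M.
Hypothesis W_norming : norming_set U M w.

Lemma Kform_err_le :
  (err_vec^T *m Kmat U f *m err_vec) 0 0
    <= (1 + inv_opnorm U M w) ^+ 2 * \sum_(k < n | (M <= k)%N) fourier U f k 0.
Proof.
set q := (err_vec^T *m _ *m _) 0 0; set s := inv_opnorm U M w.
set S := \sum_(k < n | _) _; set h := Kmat U f *m err_vec.
have h_W : sampleW w h = 0 := sampleW_Kmat_err.
have q_ge0 : 0 <= q.
  rewrite /q Kform_spectral sumr_ge0 // => k _.
  by rewrite mulr_ge0 ?sqr_ge0 ?ltW ?fourier_gt0.
have S_ge0 : 0 <= S by rewrite sumr_ge0 // => k _; rewrite ltW ?fourier_gt0.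
have s_ge0 : 0 <= s := inv_opnorm_ge0 U M w.
have q_mean : q = meanv h.
  have quad_h : quadW w mu h = 0.
    rewrite /quadW big1 // => k _; have /matrixP/(_ (w k) 0) := h_W.
    by rewrite !mxE map_f ?mem_enum // => ->; rewrite mulr0.
  by rewrite -[meanv h]subr0 -quad_h err_vecE /q mulmxA.
have q_sqr_le : q ^+ 2 <= ((1 + s ^+ 2) * S) * q.
  rewrite q_mean -mulrA; apply: le_trans (meanv_sqr_le h) _.
  apply: le_trans (enorm_sqr_vanishing_le U_orth W_norming h_W) _.
  by rewrite ler_wpM2l ?addr_ge0 ?sqr_ge0 // -q_mean tail_Kmat_le.
have q_le : q <= (1 + s ^+ 2) * S.
  have [q0 | q_neq0] := eqVneq q 0; first by rewrite q0 mulr_ge0 ?addr_ge0 ?sqr_ge0.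
  by rewrite -(ler_pM2r (_ : 0 < q)) ?lt_def ?q_neq0 // -expr2.
by apply: le_trans q_le _; rewrite ler_wpM2r // sqrrD mul1r expr1n; lra.
Qed.

End Quadrature.

Theorem corollary3 (R : realType) (n : nat) (A : 'M[R]_n) (U : 'M[R]_n)
  (lam : 'rV[R]_n) (f : 'cV[R]_n) (M N : nat) (w : 'I_N -> 'I_n)
  (mu : 'I_N -> R) :
  graph_weights A ->
  ortho_eigen (normLap A) U lam ->
  pos_def_fun U f ->
  (M <= n)%N ->
  injective w ->
  norming_set U M w ->
  (forall y, inNKW U f w y -> meanv y = quadW w mu y) ->
  forall x : 'cV[R]_n,
    `|meanv x - quadW w mu x| <=
      (1 + inv_opnorm U M w) *
      Num.sqrt (\sum_(k < n | (M <= k)%N) fourier U f k 0) * Knorm U f x.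
Proof.
move=> _ [U_orth _] f_pd _ _ W_norming Q_exact x.
rewrite err_vecE; apply: le_trans (abs_dot_le_Knorm U_orth f_pd _ _) _.
have s1_ge0 : 0 <= 1 + inv_opnorm U M w by rewrite addr_ge0 ?inv_opnorm_ge0.
rewrite ler_wpM2r ?sqrtr_ge0 // -(ger0_norm s1_ge0) -sqrtr_sqr -sqrtrM ?sqr_ge0 //.
by rewrite ler_sqrt ?mulr_ge0 ?sqr_ge0 ?Kform_err_le // sumr_ge0 // => k _;
  rewrite ltW ?fourier_gt0.
Qed.
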